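(* Let $n\ge2$, let $\gamma:I\to S^n$ be a spherical unit speed curve whose spherical dual curve $\mathbf{u}_n$ is non-singular (i.e. $\mathbf{u}_n'(s)\neq\mathbf{0}$ for all $s\in I$), let $s_0\in I$ and let $P\in S^{n-2}_{\mathbf{u}_{n-2}(s_0)}$. Then: (1) the germ $ort_{\gamma,P}:(I,s_0)\to S^n$ is $\mathcal{L}$-equivalent to $ped_{\gamma,P}:(I,s_0)\to S^n$; (2) the germ $ort_{\gamma,P}:(I,s_0)\to S^n$ is not $\mathcal{A}$-equivalent to $\mathbf{u}_n:(I,s_0)\to S^n$.
   Context: $I\subset\mathbb{R}$ is an open interval and $S^n$ the unit sphere in $\mathbb{R}^{n+1}$; the dot denotes the Euclidean inner product. A regular curve $\gamma:I\to S^n$ is a spherical unit speed curve if, setting $\mathbf{u}_{-1}\equiv\mathbf{0}$, $\mathbf{u}_0=\gamma$, $\|\mathbf{u}_0'\|\equiv 1$, $\kappa_0\equiv 0$, the maps $\mathbf{u}_i(s)=\dfrac{\mathbf{u}_{i-1}'(s)+\kappa_{i-1}(s)\mathbf{u}_{i-2}(s)}{\|\mathbf{u}_{i-1}'(s)+\kappa_{i-1}(s)\mathbf{u}_{i-2}(s)\|}$ with $\kappa_i(s)=\|\mathbf{u}_{i-1}'(s)+\kappa_{i-1}(s)\mathbf{u}_{i-2}(s)\|>0$ are well-defined for $1\le i\le n-1$ and all $s\in I$. Then $\mathbf{u}_0(s),\dots,\mathbf{u}_{n-1}(s)$ are orthonormal, and the spherical dual curve $\mathbf{u}_n:I\to S^n$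 is defined by requiring $\mathbf{u}_0(s),\dots,\mathbf{u}_n(s)$ orthonormal with $\det(\mathbf{u}_0(s),\dots,\mathbf{u}_n(s))=1$. For $P\in S^n$ with $P\cdot\mathbf{u}_n(s)\neq\pm1$, the spherical pedal curve is $ped_{\gamma,P}(s)=\dfrac{P-(P\cdot\mathbf{u}_n(s))\mathbf{u}_n(s)}{\sqrt{1-(P\cdot\mathbf{u}_n(s))^2}}$ (defined as a germ at $s_0$ when $P\neq\pm\mathbf{u}_n(s_0)$). For any $P\in S^n$ the spherical orthotomic curve is $ort_{\gamma,P}(s)=P-2(P\cdot\mathbf{u}_n(s))\mathbf{u}_n(s)$. For $-1\le i\le n$, $S^i_{\mathbf{u}_i(s)}=(S^n\setminus\{\pm\mathbf{u}_n(s)\})\cap\sum_{j=-1}^{i}\mathbb{R}\mathbf{u}_j(s)$. Two germs $f,g:(I,s_0)\to S^n$ are $\mathcal{L}$-equivalent if there is a germ of $C^\infty$ diffeomorphism $\psi:(S^n,f(s_0))\to(S^n,g(s_0))$ with $g=\psi\circ f$; they are $\mathcal{A}$-equivalent if there are germs of $C^\infty$ diffeomorphisms $\phi:(I,s_0)\to(I,s_0)$ and $\psi:(S^n,f(s_0))\to(S^n,g(s_0))$ with $g\circ\phi=\psi\circ f$. *)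

From Stdlib Require Import Reals Lra Lia.
Open Scope R_scope.

(* Points of R^{n+1} are represented as  nat -> R ; only coordinates 0..n matter. *)
Definition vec := nat -> R.
Definition vzero : vec := fun _ => 0.
Definition vadd (x y : vec) : vec := fun i => x i + y i.
Definition vopp (x : vec) : vec := fun i => - x i.
Definition vscale (a : R) (x : vec) : vec := fun i => a * x i.

Definition dot (n : nat) (x y : vec) : R := sum_f_R0 (fun i => x i * y i) n.
Definition vnorm (n : nat) (x : vec) : R := sqrt (dot n x x).
Definition vdist (n : nat) (x y : vec) : R := vnorm n (vadd x (vopp y)).
Definition veq (n : nat) (x y : vec) : Prop := forall i, (i <= n)%nat -> x i = y i.
Definition sphere (n : nat) (x : vec) : Prop := dot n x x = 1.
Definition ball (n : nat) (p : vec) (r : R) (x : vec) : Prop := vdist n x p < r.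

Fixpoint det (k : nat) (M : nat -> nat -> R) : R :=
  match k with
  | O => 1
  | S k' => sum_f_R0 (fun i => (-1) ^ i * M i O *
               det k' (fun r c => M (if Nat.ltb r i then r else S r) (S c))) k'
  end.

Definition is_open_interval (I : R -> Prop) : Prop :=
  (exists x, I x) /\
  (forall x y z, I x -> I z -> x <= y <= z -> I y) /\
  (forall x, I x -> exists e, e > 0 /\ forall y, Rabs (y - x) < e -> I y).

(* C^infinity real functions on a set J : a family closed under differentiation on J. *)
Definition smooth1_on (J : R -> Prop) (f : R -> R) : Prop :=
  exists F : (R -> R) -> Prop, F f /\
    forall g, F g -> exists h, F h /\ forall t, J t -> derivable_pt_lim g t (h t).

Definition vderiv (n : nat) (c : R -> vec) (s : R) (d : vec) : Prop :=
  forall i, (i <= n)%nat -> derivable_pt_lim (fun t => c t i) s (d i).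

(* C^infinity functions R^{n+1} -> R on an (open) set U: a family of functions,
   continuous on U, closed under all partial derivatives on U. *)
Definition upd (x : vec) (i : nat) (t : R) : vec :=
  fun j => if Nat.eqb j i then t else x j.
Definition partial_at (f : vec -> R) (i : nat) (x : vec) (d : R) : Prop :=
  derivable_pt_lim (fun t => f (upd x i t)) (x i) d.
Definition cont_on (n : nat) (U : vec -> Prop) (f : vec -> R) : Prop :=
  forall x, U x -> forall e, e > 0 -> exists d, d > 0 /\
    forall y, vdist n y x < d -> Rabs (f y - f x) < e.
Definition smooth_on (n : nat) (U : vec -> Prop) (f : vec -> R) : Prop :=
  exists F : (vec -> R) -> Prop, F f /\
    forall g, F g -> cont_on n U g /\
      forall i, (i <= n)%nat -> exists h, F h /\ forall x, U x -> partial_at g i x (h x).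
Definition smooth_map_on (n : nat) (U : vec -> Prop) (psi : vec -> vec) : Prop :=
  forall i, (i <= n)%nat -> smooth_on n U (fun x => psi x i).

(* Germ of C^infinity diffeomorphism (S^n,p) -> (S^n,q): psi is (near p) the restriction
   of a smooth ambient map, with a smooth inverse germ phi at q. *)
Definition sphere_diffeo_germ (n : nat) (p q : vec) (psi : vec -> vec) : Prop :=
  exists eps, eps > 0 /\ exists phi : vec -> vec,
    veq n (psi p) q /\
    smooth_map_on n (ball n p eps) psi /\
    smooth_map_on n (ball n q eps) phi /\
    (forall x, sphere n x -> ball n p eps x -> sphere n (psi x) /\ veq n (phi (psi x)) x) /\
    (forall y, sphere n y -> ball n q eps y -> sphere n (phi y) /\ veq n (psi (phi y)) y).

Definition real_diffeo_germ (s0 : R) (phi : R -> R) : Prop :=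
  exists eps, eps > 0 /\ exists chi : R -> R,
    phi s0 = s0 /\
    smooth1_on (fun s => Rabs (s - s0) < eps) phi /\
    smooth1_on (fun s => Rabs (s - s0) < eps) chi /\
    (forall s, Rabs (s - s0) < eps -> chi (phi s) = s /\ phi (chi s) = s).

Definition L_equiv (n : nat) (I : R -> Prop) (s0 : R) (f g : R -> vec) : Prop :=
  exists psi, sphere_diffeo_germ n (f s0) (g s0) psi /\
    exists d, d > 0 /\ forall s, I s -> Rabs (s - s0) < d -> veq n (g s) (psi (f s)).

Definition A_equiv (n : nat) (I : R -> Prop) (s0 : R) (f g : R -> vec) : Prop :=
  exists phi psi, real_diffeo_germ s0 phi /\ sphere_diffeo_germ n (f s0) (g s0) psi /\
    exists d, d > 0 /\ forall s, I s -> Rabs (s - s0) < d -> veq n (g (phi s)) (psi (f s)).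

(* gamma : I -> S^n is a spherical unit speed curve, with the maps u_i (0 <= i <= n-1)
   and curvatures kappa_i as in the construction (u_{-1} = 0 is encoded by kappa_0 = 0). *)
Definition spherical_unit_speed (n : nat) (I : R -> Prop) (gamma : R -> vec)
    (u : nat -> R -> vec) (kappa : nat -> R -> R) : Prop :=
  (forall i, (i <= n)%nat -> smooth1_on I (fun s => gamma s i)) /\
  (forall s, I s -> sphere n (gamma s)) /\
  u O = gamma /\
  (forall s, kappa O s = 0) /\
  (forall s, I s -> exists d, vderiv n gamma s d /\ vnorm n d = 1) /\
  (forall i s, (1 <= i <= n - 1)%nat -> I s ->
     exists d, vderiv n (u (i - 1)%nat) s d /\
       let w := vadd d (vscale (kappa (i - 1)%nat s) (u (i - 2)%nat s)) in
       kappa i s = vnorm n w /\ kappa i s > 0 /\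
       veq n (u i s) (vscale (/ kappa i s) w)).

Definition spherical_dual (n : nat) (I : R -> Prop) (u : nat -> R -> vec) (un : R -> vec) : Prop :=
  forall s, I s ->
    dot n (un s) (un s) = 1 /\
    (forall j, (j < n)%nat -> dot n (u j s) (un s) = 0) /\
    det (S n) (fun i j => (if Nat.ltb j n then u j s else un s) i) = 1.

Definition ped (n : nat) (P : vec) (un : R -> vec) (s : R) : vec :=
  vscale (/ sqrt (1 - (dot n P (un s)) ^ 2))
         (vadd P (vscale (- dot n P (un s)) (un s))).

Definition ort (n : nat) (P : vec) (un : R -> vec) (s : R) : vec :=
  vadd P (vscale (- (2 * dot n P (un s))) (un s)).

(* P in S^{n-2}_{u_{n-2}(s0)} = (S^n \ {+-u_n(s0)}) cap span(u_{-1},...,u_{n-2})(s0). *)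
Definition in_S_n_minus_2 (n : nat) (u : nat -> R -> vec) (un : R -> vec) (s0 : R) (P : vec) : Prop :=
  sphere n P /\ ~ veq n P (un s0) /\ ~ veq n P (vopp (un s0)) /\
  exists c : nat -> R,
    veq n P (fun k => sum_f_R0 (fun j => c j * u j s0 k) (n - 2)).

(* The ambient map  psi(x) = (x + P)/|x + P|  is a diffeomorphism germ of
   (S^n, P) with inverse  phi(y) = 2 (y.P) y - P.  Writing t = P.u_n(s), one has
   |ort + P| = 2 sqrt(1 - t^2), hence psi(ort(s)) = ped(s); since t(s0) = 0 the
   relation holds near s0.  Smoothness of psi and phi is obtained once and for all by
   writing them in a small language of expressions (constants, coordinates, +, *, 1/sqrt)
   which is closed under partial differentiation.

   The Frenet-type recursion gives u_j' in span(u_{j-1}, u_{j+1}), so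
   differentiating u_j.u_n = 0 yields u_j(s0).u_n'(s0) = 0 for j <= n-2; hence
   t(s0) = t'(s0) = 0 and ort'(s0) = 0, while u_n'(s0) <> 0.  An A-equivalence
   u_n o ph = ps o ort would give u_n'(s0) ph'(s0) = 0 with ph'(s0) <> 0, by a chain rule
   for a smooth ambient map composed with a curve of zero velocity (proved by the mean
   value theorem along coordinate paths). *)

From Stdlib Require Import Reals Lra Lia FunctionalExtensionality.
Open Scope R_scope.

Lemma derivable_pt_lim_near (f g : R -> R) x l d : d > 0 ->
  (forall t, Rabs (t - x) < d -> f t = g t) ->
  derivable_pt_lim f x l -> derivable_pt_lim g x l.
Proof.
  intros Hd Hfg. apply (derivable_pt_lim_locally_ext f g x (x - d) (x + d)); [lra|].
  intros z Hz. apply Hfg. apply Rabs_def1; lra.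
Qed.

Lemma derivable_pt_lim_unique_near (f g : R -> R) x l1 l2 d : d > 0 ->
  (forall t, Rabs (t - x) < d -> f t = g t) ->
  derivable_pt_lim f x l1 -> derivable_pt_lim g x l2 -> l1 = l2.
Proof.
  intros Hd Hfg D1 D2. apply (uniqueness_limite g x); [|exact D2].
  exact (derivable_pt_lim_near f g x l1 d Hd Hfg D1).
Qed.

Lemma continuity_pt_near f x e : continuity_pt f x -> e > 0 ->
  exists d, d > 0 /\ forall y, Rabs (y - x) < d -> Rabs (f y - f x) < e.
Proof.
  intros Hc He. destruct (Hc e He) as [al [Hal H]]. exists al; split; auto.
  intros y Hy. destruct (Req_dec y x) as [->|Ne].
  - rewrite Rminus_diag, Rabs_R0; lra.
  - apply (H y). split; [split; [exact I| auto]| exact Hy].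
Qed.

Lemma derivable_pt_lim_continuity f x l : derivable_pt_lim f x l -> continuity_pt f x.
Proof. intros H. apply derivable_continuous_pt. exists l; auto. Qed.

Lemma derivable_pt_lim_0_bound f s0 e : derivable_pt_lim f s0 0 -> e > 0 ->
  exists d, d > 0 /\ forall s, Rabs (s - s0) < d -> Rabs (f s - f s0) <= e * Rabs (s - s0).
Proof.
  intros D He. destruct (D e He) as [del Hdel]. exists del; split; [apply cond_pos|].
  intros s Hs. destruct (Req_dec s s0) as [->|Hne].
  - rewrite !Rminus_diag, Rabs_R0. lra.
  - specialize (Hdel (s - s0)). replace (s0 + (s - s0)) with s in Hdel by ring.
    assert (Hp : 0 < Rabs (s - s0)) by (apply Rabs_pos_lt; lra).
    specialize (Hdel ltac:(lra) Hs). rewrite Rminus_0_r in Hdel.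
    unfold Rdiv in Hdel. rewrite Rabs_mult, Rabs_inv in Hdel.
    apply Rmult_lt_compat_r with (r := Rabs (s - s0)) in Hdel; auto.
    rewrite Rmult_assoc, Rinv_l in Hdel by lra. lra.
Qed.

Lemma mean_value_bound (f f' : R -> R) u v M :
  (forall c, Rmin u v <= c <= Rmax u v -> derivable_pt_lim f c (f' c) /\ Rabs (f' c) <= M) ->
  Rabs (f v - f u) <= M * Rabs (v - u).
Proof.
  intros H. destruct (Rtotal_order u v) as [Hl|[He|Hg]].
  - rewrite Rmin_left, Rmax_right in H by lra.
    destruct (MVT_cor2 f f' u v Hl) as [c [Hc1 Hc2]]; [intros c Hc; apply H; lra|].
    rewrite Hc1, Rabs_mult. apply Rmult_le_compat_r; [apply Rabs_pos|apply H; lra].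
  - subst. rewrite !Rminus_diag, Rabs_R0, Rmult_0_r. lra.
  - rewrite Rmin_right, Rmax_left in H by lra.
    destruct (MVT_cor2 f f' v u Hg) as [c [Hc1 Hc2]]; [intros c Hc; apply H; lra|].
    rewrite <- Rabs_Ropp, <- (Rabs_Ropp (v - u)).
    replace (- (f v - f u)) with (f u - f v) by ring. replace (- (v - u)) with (u - v) by ring.
    rewrite Hc1, Rabs_mult. apply Rmult_le_compat_r; [apply Rabs_pos|apply H; lra].
Qed.

Lemma dot_S n x y : dot (S n) x y = dot n x y + x (S n) * y (S n).
Proof. reflexivity. Qed.

Lemma dot_ext n x y x' y' : veq n x x' -> veq n y y' -> dot n x y = dot n x' y'.
Proof. intros H1 H2. unfold dot. apply sum_eq. intros i Hi. rewrite H1, H2; auto. Qed.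

Lemma sum_lin3 m a b c (f g h : nat -> R) :
  sum_f_R0 (fun j => a * f j + b * g j + c * h j) m =
  a * sum_f_R0 f m + b * sum_f_R0 g m + c * sum_f_R0 h m.
Proof. induction m; simpl; [ring| rewrite IHm; ring]. Qed.

Lemma dot_lin n a b x y z :
  dot n (fun k => a * x k + b * y k) z = a * dot n x z + b * dot n y z.
Proof. induction n; [unfold dot; simpl; ring | rewrite !dot_S, IHn; ring]. Qed.

Lemma dot_span n m (c : nat -> R) (u : nat -> vec) w :
  dot n (fun k => sum_f_R0 (fun j => c j * u j k) m) w =
  sum_f_R0 (fun j => c j * dot n (u j) w) m.
Proof.
  induction m; simpl.
  - unfold dot. rewrite scal_sum. apply sum_eq; intros; ring.
  - rewrite <- IHm. unfold dot. rewrite scal_sum, <- plus_sum. apply sum_eq; intros; ring.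
Qed.

Lemma dot_deriv n (c1 c2 : R -> vec) d1 d2 s :
  vderiv n c1 s d1 -> vderiv n c2 s d2 ->
  derivable_pt_lim (fun t => dot n (c1 t) (c2 t)) s (dot n d1 (c2 s) + dot n (c1 s) d2).
Proof.
  intros H1 H2. induction n.
  - apply (derivable_pt_lim_mult (fun t => c1 t 0%nat) (fun t => c2 t 0%nat)); auto.
  - assert (IH := IHn (fun i Hi => H1 i (Nat.le_le_succ_r _ _ Hi))
                      (fun i Hi => H2 i (Nat.le_le_succ_r _ _ Hi))).
    rewrite !dot_S.
    replace (_ + _ + (_ + _)) with ((dot n d1 (c2 s) + dot n (c1 s) d2) +
      (d1 (S n) * c2 s (S n) + c1 s (S n) * d2 (S n))) by ring.
    apply (derivable_pt_lim_plus (fun t => dot n (c1 t) (c2 t))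
                                 (fun t => c1 t (S n) * c2 t (S n))); auto.
    apply (derivable_pt_lim_mult (fun t => c1 t (S n)) (fun t => c2 t (S n))); auto.
Qed.

Lemma dot_const_deriv n (A : vec) (c : R -> vec) d s :
  vderiv n c s d -> derivable_pt_lim (fun t => dot n A (c t)) s (dot n A d).
Proof.
  intros Hc. assert (Hzero : dot n (fun _ => 0) (c s) = 0).
  { clear Hc; induction n; [unfold dot; simpl; ring| rewrite dot_S, IHn; ring]. }
  assert (HA : vderiv n (fun _ => A) s (fun _ => 0)) by (intros i _; apply derivable_pt_lim_const).
  pose proof (dot_deriv n (fun _ => A) c _ d s HA Hc) as H.
  rewrite Hzero, Rplus_0_l in H. exact H.
Qed.

Lemma vdist_sq n y x : vdist n y x = sqrt (sum_f_R0 (fun j => (y j - x j) * (y j - x j)) n).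
Proof. reflexivity. Qed.

Lemma sq_abs (x : R) : x * x = Rabs x * Rabs x.
Proof. rewrite <- Rabs_mult, Rabs_pos_eq; [ring|apply Rle_0_sqr]. Qed.

Lemma coord_le_vdist n y x j : (j <= n)%nat -> Rabs (y j - x j) <= vdist n y x.
Proof.
  intros Hj. rewrite vdist_sq, <- sqrt_Rsqr_abs. apply sqrt_le_1_alt. unfold Rsqr.
  set (f := fun j => (y j - x j) * (y j - x j)).
  assert (Hf : forall i, 0 <= f i) by (intros; apply Rle_0_sqr).
  change (f j <= sum_f_R0 f n). clear -Hj Hf. induction n.
  - replace j with 0%nat by lia. simpl; lra.
  - simpl. destruct (Nat.eq_dec j (S n)) as [->|Hne].
    + assert (0 <= sum_f_R0 f n) by (apply cond_pos_sum; auto). lra.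
    + specialize (IHn ltac:(lia)). specialize (Hf (S n)). lra.
Qed.

Lemma vdist_le n x b a :
  (forall j, (j <= n)%nat -> Rabs (x j - a j) <= Rabs (b j - a j)) ->
  vdist n x a <= vdist n b a.
Proof.
  intros H. rewrite !vdist_sq. apply sqrt_le_1_alt. apply sum_Rle. intros j Hj.
  specialize (H j Hj). pose proof (Rabs_pos (x j - a j)).
  rewrite (sq_abs (x j - a j)), (sq_abs (b j - a j)). nra.
Qed.

Lemma vdist_veq0 n x y : veq n x y -> vdist n y x = 0.
Proof.
  intros H. rewrite vdist_sq, <- sqrt_0. f_equal.
  transitivity (sum_f_R0 (fun _ => 0) n); [apply sum_eq; intros i Hi; rewrite H; auto; ring|].
  clear; induction n; simpl; [ring| rewrite IHn; ring].
Qed.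

Lemma vdist_veq n x x' a a' : veq n x x' -> veq n a a' -> vdist n x a = vdist n x' a'.
Proof. intros H1 H2. rewrite !vdist_sq. f_equal. apply sum_eq; intros i Hi; rewrite H1, H2; auto. Qed.

Lemma vdist_small n (b : R -> vec) (a : vec) s0 :
  (forall j, (j <= n)%nat -> continuity_pt (fun s => b s j) s0 /\ b s0 j = a j) ->
  forall r, r > 0 -> exists d, d > 0 /\ forall s, Rabs (s - s0) < d -> vdist n (b s) a < r.
Proof.
  intros H.
  assert (Hcoord : forall j r, (j <= n)%nat -> r > 0 -> exists d, d > 0 /\
     forall s, Rabs (s - s0) < d -> (b s j - a j) * (b s j - a j) < r).
  { intros j r Hj Hr. destruct (H j Hj) as [Hc Ha].
    destruct (continuity_pt_near _ _ (sqrt r) Hc) as [d [Hd Hs]]; [apply sqrt_lt_R0; lra|].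
    exists d; split; auto. intros s Hs'. specialize (Hs s Hs'). rewrite Ha in Hs.
    pose proof (Rabs_pos (b s j - a j)). pose proof (sqrt_sqrt r ltac:(lra)).
    rewrite sq_abs. nra. }
  assert (Hsum : forall m, (m <= n)%nat -> forall r, r > 0 -> exists d, d > 0 /\
     forall s, Rabs (s - s0) < d -> sum_f_R0 (fun j => (b s j - a j) * (b s j - a j)) m < r).
  { induction m; intros Hm r Hr; [apply Hcoord; auto|].
    destruct (IHm ltac:(lia) (r/2) ltac:(lra)) as [d1 [Hd1 H1]].
    destruct (Hcoord (S m) (r/2) Hm ltac:(lra)) as [d2 [Hd2 H2]].
    exists (Rmin d1 d2); split; [apply Rmin_pos; lra|]. intros s Hs. simpl.
    specialize (H1 s ltac:(pose proof (Rmin_l d1 d2); lra)).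
    specialize (H2 s ltac:(pose proof (Rmin_r d1 d2); lra)). lra. }
  intros r Hr. destruct (Hsum n (le_n _) (r * r)) as [d [Hd Hs]]; [nra|].
  exists d; split; auto. intros s Hs'. rewrite vdist_sq, <- (sqrt_square r) by lra.
  apply sqrt_lt_1_alt. split; [apply cond_pos_sum; intros; apply Rle_0_sqr| auto].
Qed.
(** * Smooth maps along curves of zero velocity *)

Lemma cont_on_veq n U g x y : cont_on n U g -> U x -> veq n x y -> g x = g y.
Proof.
  intros Hc Hx Hv. destruct (Req_dec (g x) (g y)) as [E|Ne]; auto.
  destruct (Hc x Hx (Rabs (g y - g x))) as [d [Hd H]];
    [apply Rabs_pos_lt; intro; apply Ne; lra|].
  specialize (H y). rewrite (vdist_veq0 n x y Hv) in H. specialize (H Hd). lra.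
Qed.

Lemma upd_same x i : upd x i (x i) = x.
Proof. extensionality j. unfold upd. destruct (Nat.eqb_spec j i); subst; auto. Qed.

Lemma upd_upd x i a b : upd (upd x i a) i b = upd x i b.
Proof. extensionality j. unfold upd. destruct (Nat.eqb j i); auto. Qed.

Lemma upd_eq x i a : upd x i a i = a.
Proof. unfold upd. rewrite Nat.eqb_refl. auto. Qed.

(* [mix a x k] takes its first k coordinates from x and the others from a; it walks
   from a to x one coordinate at a time. *)
Definition mix (a x : vec) (k : nat) : vec := fun j => if Nat.ltb j k then x j else a j.

Lemma mix_0 a x : mix a x 0 = a.
Proof. extensionality j. unfold mix. destruct j; reflexivity. Qed.

Lemma mix_S a x k : mix a x (S k) = upd (mix a x k) k (x k).
Proof.
  extensionality j. unfold mix, upd.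
  destruct (Nat.eqb_spec j k) as [->|Hne].
  - replace (Nat.ltb k (S k)) with true; auto. symmetry; apply Nat.ltb_lt; lia.
  - destruct (Nat.ltb_spec j (S k)); destruct (Nat.ltb_spec j k); auto; lia.
Qed.

Lemma mix_k a x k : upd (mix a x k) k (a k) = mix a x k.
Proof.
  extensionality j. unfold mix, upd.
  destruct (Nat.eqb_spec j k) as [->|Hne]; auto.
  replace (Nat.ltb k k) with false; auto. symmetry; apply Nat.ltb_ge; lia.
Qed.

Lemma mix_full n a x : veq n (mix a x (S n)) x.
Proof. intros j Hj. unfold mix. replace (Nat.ltb j (S n)) with true; auto. symmetry; apply Nat.ltb_lt; lia. Qed.

Lemma mix_segment_dist n a x k t : Rmin (a k) (x k) <= t <= Rmax (a k) (x k) ->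
  vdist n (upd (mix a x k) k t) a <= vdist n x a.
Proof.
  intros Ht. apply vdist_le. intros j Hj. unfold upd, mix.
  destruct (Nat.eqb_spec j k) as [->|Hne].
  - unfold Rmin, Rmax in Ht. destruct (Rle_dec (a k) (x k)).
    + rewrite !Rabs_pos_eq; lra.
    + rewrite !Rabs_left1; lra.
  - destruct (Nat.ltb j k); [lra|]. rewrite Rminus_diag, Rabs_R0. apply Rabs_pos.
Qed.

Section ZeroVelocityChainRule.
Variables (n : nat) (g : vec -> R) (a : vec) (eps : R).
Hypothesis Heps : eps > 0.
Hypothesis Hg : smooth_on n (ball n a eps) g.

Lemma ball_center : ball n a eps a.
Proof. unfold ball. rewrite vdist_veq0; [lra| intros i _; auto]. Qed.

Lemma mix_step_bound k : (k <= n)%nat -> exists M r, M > 0 /\ r > 0 /\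
  forall x, vdist n x a < r ->
    Rabs (g (mix a x (S k)) - g (mix a x k)) <= M * Rabs (x k - a k).
Proof.
  intros Hk. destruct Hg as [F [HFg HF]].
  destruct (HF g HFg) as [_ Hgp]. destruct (Hgp k Hk) as [h [Fh Ph]].
  destruct (HF h Fh) as [Hhc _].
  destruct (Hhc a ball_center 1 ltac:(lra)) as [dc [Hdc Hc]].
  exists (Rabs (h a) + 1), (Rmin eps dc).
  split; [pose proof (Rabs_pos (h a)); lra|]. split; [apply Rmin_pos; lra|].
  intros x Hx. rewrite mix_S.
  replace (g (mix a x k)) with (g (upd (mix a x k) k (a k))) by (rewrite mix_k; reflexivity).
  apply (mean_value_bound (fun t => g (upd (mix a x k) k t)) (fun t => h (upd (mix a x k) k t))).
  intros c Hcr.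
  assert (Hcx : vdist n (upd (mix a x k) k c) a < Rmin eps dc).
  { eapply Rle_lt_trans; [|exact Hx]. apply mix_segment_dist, Hcr. }
  split.
  - assert (Hin : ball n a eps (upd (mix a x k) k c)).
    { unfold ball. pose proof (Rmin_l eps dc). lra. }
    pose proof (Ph _ Hin) as D. unfold partial_at in D. rewrite upd_eq in D.
    eapply derivable_pt_lim_ext; [|exact D]. intros t. simpl. rewrite upd_upd. reflexivity.
  - specialize (Hc (upd (mix a x k) k c) ltac:(pose proof (Rmin_r eps dc); lra)).
    pose proof (Rabs_triang_inv (h (upd (mix a x k) k c)) (h a)). lra.
Qed.

Variables (b : R -> vec) (s0 : R).
Hypothesis Hb0 : veq n (b s0) a.
Hypothesis Hbd : forall j, (j <= n)%nat -> derivable_pt_lim (fun s => b s j) s0 0.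

Lemma curve_continuity : forall j, (j <= n)%nat ->
  continuity_pt (fun s => b s j) s0 /\ b s0 j = a j.
Proof. intros j Hj; split; [eapply derivable_pt_lim_continuity; eauto| apply Hb0; auto]. Qed.

Lemma mix_increment k : (k <= S n)%nat -> forall e, e > 0 -> exists d, d > 0 /\
  forall s, Rabs (s - s0) < d -> Rabs (g (mix a (b s) k) - g a) <= e * Rabs (s - s0).
Proof.
  induction k; intros Hk e He.
  - exists 1; split; [lra|]. intros s _. rewrite mix_0, Rminus_diag, Rabs_R0.
    pose proof (Rabs_pos (s - s0)); nra.
  - destruct (IHk ltac:(lia) (e/2) ltac:(lra)) as [d3 [Hd3 H3]].
    destruct (mix_step_bound k ltac:(lia)) as [M [r [HM [Hr Hstep]]]].
    destruct (vdist_small n b a s0 curve_continuity r Hr) as [d1 [Hd1 H1]].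
    destruct (derivable_pt_lim_0_bound (fun s => b s k) s0 (e / (2 * M)) (Hbd k ltac:(lia)))
      as [d2 [Hd2 H2]]; [apply Rdiv_lt_0_compat; lra|].
    exists (Rmin d1 (Rmin d2 d3)); split; [repeat apply Rmin_pos; lra|].
    intros s Hs. pose proof (Rmin_l d1 (Rmin d2 d3)). pose proof (Rmin_r d1 (Rmin d2 d3)).
    pose proof (Rmin_l d2 d3). pose proof (Rmin_r d2 d3).
    specialize (Hstep _ (H1 s ltac:(lra))). specialize (H3 s ltac:(lra)).
    specialize (H2 s ltac:(lra)). simpl in H2. rewrite (Hb0 k ltac:(lia)) in H2.
    assert (HMb : M * Rabs (b s k - a k) <= e / 2 * Rabs (s - s0)).
    { replace (e / 2 * Rabs (s - s0)) with (M * (e / (2 * M) * Rabs (s - s0))) by (field; lra).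
      apply Rmult_le_compat_l; lra. }
    replace (g (mix a (b s) (S k)) - g a) with
      ((g (mix a (b s) (S k)) - g (mix a (b s) k)) + (g (mix a (b s) k) - g a)) by ring.
    eapply Rle_trans; [apply Rabs_triang|]. lra.
Qed.

Lemma smooth_comp_zero_velocity : derivable_pt_lim (fun s => g (b s)) s0 0.
Proof.
  destruct Hg as [F [HFg HF]]. destruct (HF g HFg) as [Hgc _].
  intros e He.
  destruct (mix_increment (S n) (le_n _) (e/2) ltac:(lra)) as [d [Hd H]].
  destruct (vdist_small n b a s0 curve_continuity eps Heps) as [d1 [Hd1 H1]].
  assert (Hm : 0 < Rmin d d1) by (apply Rmin_pos; lra).
  exists (mkposreal _ Hm). intros h Hh Hh2. simpl in Hh2.
  pose proof (Rmin_l d d1). pose proof (Rmin_r d d1).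
  specialize (H (s0 + h)). specialize (H1 (s0 + h)).
  replace (s0 + h - s0) with h in H, H1 by ring.
  specialize (H ltac:(lra)). specialize (H1 ltac:(lra)).
  assert (Hzin : ball n a eps (mix a (b (s0 + h)) (S n))).
  { unfold ball. rewrite (vdist_veq n _ (b (s0 + h)) a a); auto. apply mix_full. intros i _; auto. }
  rewrite (cont_on_veq n _ g _ _ Hgc Hzin (mix_full n a _)) in H.
  rewrite <- (cont_on_veq n _ g _ _ Hgc ball_center (fun i Hi => eq_sym (Hb0 i Hi))).
  rewrite Rminus_0_r. unfold Rdiv. rewrite Rabs_mult, Rabs_inv.
  assert (Hp : 0 < Rabs h) by (apply Rabs_pos_lt; auto).
  apply Rmult_le_compat_r with (r := / Rabs h) in H; [|left; apply Rinv_0_lt_compat; auto].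
  rewrite Rmult_assoc, Rinv_r in H by lra. lra.
Qed.

End ZeroVelocityChainRule.
(** * Smoothness of explicit expressions *)

(* Expressions in the coordinates of x : built from constants, coordinates, +, * and
   t |-> 1/sqrt t.  They are closed under formal partial differentiation [dx], which
   makes smoothness of their evaluations a matter of one induction. *)
Inductive expr :=
  | EConst (r : R) | ECoord (j : nat) | EAdd (e1 e2 : expr) | EMul (e1 e2 : expr)
  | EInvSqrt (e : expr).

Fixpoint eval (e : expr) (x : vec) : R :=
  match e with
  | EConst r => r
  | ECoord j => x j
  | EAdd e1 e2 => eval e1 x + eval e2 x
  | EMul e1 e2 => eval e1 x * eval e2 x
  | EInvSqrt e => / sqrt (eval e x)
  end.

Fixpoint dx (e : expr) (i : nat) : expr :=
  match e with
  | EConst _ => EConst 0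
  | ECoord j => EConst (if Nat.eqb j i then 1 else 0)
  | EAdd e1 e2 => EAdd (dx e1 i) (dx e2 i)
  | EMul e1 e2 => EAdd (EMul (dx e1 i) e2) (EMul e1 (dx e2 i))
  | EInvSqrt e =>
      EMul (EMul (EConst (- / 2)) (dx e i)) (EMul (EInvSqrt e) (EMul (EInvSqrt e) (EInvSqrt e)))
  end.

Fixpoint wf (n : nat) (U : vec -> Prop) (e : expr) : Prop :=
  match e with
  | EConst _ => True
  | ECoord j => (j <= n)%nat
  | EAdd e1 e2 | EMul e1 e2 => wf n U e1 /\ wf n U e2
  | EInvSqrt e => wf n U e /\ forall x, U x -> eval e x > 0
  end.

Lemma wf_dx n U e i : wf n U e -> wf n U (dx e i).
Proof. induction e; simpl; intuition. Qed.

Lemma dx_correct n U e x i : wf n U e -> U x ->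
  derivable_pt_lim (fun t => eval e (upd x i t)) (x i) (eval (dx e i) x).
Proof.
  intros Hw Hx. induction e; simpl in *.
  - apply derivable_pt_lim_const.
  - unfold upd. destruct (Nat.eqb j i).
    + apply derivable_pt_lim_id.
    + apply derivable_pt_lim_const.
  - destruct Hw as [H1 H2].
    apply (derivable_pt_lim_plus (fun t => eval e1 (upd x i t)) (fun t => eval e2 (upd x i t))); auto.
  - destruct Hw as [H1 H2].
    pose proof (derivable_pt_lim_mult (fun t => eval e1 (upd x i t)) (fun t => eval e2 (upd x i t))
                  _ _ _ (IHe1 H1) (IHe2 H2)) as D.
    simpl in D. rewrite upd_same in D. exact D.
  - destruct Hw as [H1 Hp]. specialize (IHe H1). set (A := eval e x) in *.
    assert (HA : A > 0) by (apply Hp; auto).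
    assert (HsA : sqrt A > 0) by (apply sqrt_lt_R0; auto).
    pose proof (derivable_pt_lim_comp (fun t => eval e (upd x i t)) sqrt (x i) _ (/ (2 * sqrt A)) IHe) as D1.
    simpl in D1. rewrite upd_same in D1. specialize (D1 (derivable_pt_lim_sqrt A HA)).
    pose proof (derivable_pt_lim_div (fun _ => 1) (comp sqrt (fun t => eval e (upd x i t))) (x i) 0 _
                 (derivable_pt_lim_const 1 (x i)) D1) as D2.
    unfold comp in D2. rewrite upd_same in D2. fold A in D2. specialize (D2 ltac:(lra)).
    match goal with |- derivable_pt_lim _ _ ?v => replace v with
      ((0 * sqrt A - / (2 * sqrt A) * eval (dx e i) x * 1) / (sqrt A)²) end.
    + eapply derivable_pt_lim_ext; [|exact D2]. intro t. unfold div_fct, comp, Rdiv. ring.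
    + unfold Rsqr. field. lra.
Qed.

Definition vcont_at n (g : vec -> R) x := forall e, e > 0 -> exists d, d > 0 /\
  forall y, vdist n y x < d -> Rabs (g y - g x) < e.

Lemma vcont_at_const n r x : vcont_at n (fun _ => r) x.
Proof. intros e He. exists 1; split; [lra|]. intros. rewrite Rminus_diag, Rabs_R0; lra. Qed.

Lemma vcont_at_coord n j x : (j <= n)%nat -> vcont_at n (fun y => y j) x.
Proof. intros Hj e He. exists e; split; auto. intros y Hy. pose proof (coord_le_vdist n y x j Hj). lra. Qed.

Lemma vcont_at_add n f g x : vcont_at n f x -> vcont_at n g x -> vcont_at n (fun y => f y + g y) x.
Proof.
  intros Hf Hg e He. destruct (Hf (e/2) ltac:(lra)) as [d1 [Hd1 H1]].
  destruct (Hg (e/2) ltac:(lra)) as [d2 [Hd2 H2]].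
  exists (Rmin d1 d2); split; [apply Rmin_pos; lra|]. intros y Hy.
  specialize (H1 y ltac:(pose proof (Rmin_l d1 d2); lra)).
  specialize (H2 y ltac:(pose proof (Rmin_r d1 d2); lra)).
  replace (f y + g y - (f x + g x)) with ((f y - f x) + (g y - g x)) by ring.
  eapply Rle_lt_trans; [apply Rabs_triang|lra].
Qed.

Lemma vcont_at_mul n f g x : vcont_at n f x -> vcont_at n g x -> vcont_at n (fun y => f y * g y) x.
Proof.
  intros Hf Hg e He.
  set (M := Rabs (g x) + 1). set (N := Rabs (f x) + 1).
  assert (HM : M > 0) by (unfold M; pose proof (Rabs_pos (g x)); lra).
  assert (HN : N > 0) by (unfold N; pose proof (Rabs_pos (f x)); lra).
  destruct (Hf (e/(2*M))) as [d1 [Hd1 H1]]; [apply Rdiv_lt_0_compat; lra|].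
  destruct (Hg (Rmin 1 (e/(2*N)))) as [d2 [Hd2 H2]];
    [apply Rmin_pos; [lra|apply Rdiv_lt_0_compat; lra]|].
  exists (Rmin d1 d2); split; [apply Rmin_pos; lra|]. intros y Hy.
  specialize (H1 y ltac:(pose proof (Rmin_l d1 d2); lra)).
  specialize (H2 y ltac:(pose proof (Rmin_r d1 d2); lra)).
  pose proof (Rmin_l 1 (e/(2*N))). pose proof (Rmin_r 1 (e/(2*N))).
  assert (Bg : Rabs (g y) <= M) by (unfold M; pose proof (Rabs_triang_inv (g y) (g x)); lra).
  replace (f y * g y - f x * g x) with ((f y - f x) * g y + f x * (g y - g x)) by ring.
  eapply Rle_lt_trans; [apply Rabs_triang|]. rewrite !Rabs_mult.
  assert (C1 : Rabs (f y - f x) * Rabs (g y) <= e/(2*M) * M).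
  { apply Rmult_le_compat; try apply Rabs_pos; lra. }
  assert (C2 : Rabs (f x) * Rabs (g y - g x) < N * (e/(2*N))).
  { apply Rmult_le_0_lt_compat; try apply Rabs_pos; [unfold N; lra|lra]. }
  replace (e/(2*M) * M) with (e/2) in C1 by (field; lra).
  replace (N * (e/(2*N))) with (e/2) in C2 by (field; lra).
  lra.
Qed.

Lemma vcont_at_comp n g x (k : R -> R) :
  vcont_at n g x -> continuity_pt k (g x) -> vcont_at n (fun y => k (g y)) x.
Proof.
  intros Hg Hk e He. destruct (continuity_pt_near k (g x) e Hk He) as [al [Hal H]].
  destruct (Hg al Hal) as [d [Hd H2]]. exists d; split; auto.
Qed.

Lemma eval_vcont_at n U e x : wf n U e -> U x -> vcont_at n (eval e) x.
Proof.
  intros Hw Hx. induction e; simpl in *.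
  - apply vcont_at_const.
  - apply vcont_at_coord; auto.
  - destruct Hw; apply vcont_at_add; auto.
  - destruct Hw; apply vcont_at_mul; auto.
  - destruct Hw as [H1 Hp]. apply (vcont_at_comp n (eval e) x (fun v => / sqrt v)); auto.
    assert (Hpos : eval e x > 0) by (apply Hp, Hx).
    assert (Hs : 0 < sqrt (eval e x)) by (apply sqrt_lt_R0; lra).
    apply (continuity_pt_inv sqrt); [apply continuity_pt_sqrt; lra|lra].
Qed.

Lemma eval_smooth n U e : wf n U e -> smooth_on n U (eval e).
Proof.
  intros Hw. exists (fun g => exists e, wf n U e /\ g = eval e). split; [eauto|].
  intros g [e' [Hw' ->]]. split.
  - intros x Hx. apply (eval_vcont_at n U); auto.
  - intros i Hi. exists (eval (dx e' i)). split; [exists (dx e' i); split; auto; apply wf_dx; auto|].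
    intros x Hx. apply (dx_correct n U); auto.
Qed.

Fixpoint esum (m : nat) (f : nat -> expr) : expr :=
  match m with O => f O | S m => EAdd (esum m f) (f (S m)) end.

Lemma eval_esum m f x : eval (esum m f) x = sum_f_R0 (fun j => eval (f j) x) m.
Proof. induction m; simpl; auto. rewrite IHm; auto. Qed.

Lemma wf_esum n U m f : (forall j, (j <= m)%nat -> wf n U (f j)) -> wf n U (esum m f).
Proof. induction m; intros H; simpl; [apply H; lia|]. split; [apply IHm; intros|]; apply H; lia. Qed.
(** * The diffeomorphism psi(x) = (x + P)/|x + P| of (S^n, P) *)

Section CentralProjection.
Variables (n : nat) (P : vec).

Definition Q (x : vec) : R := sum_f_R0 (fun j => (x j + P j) * (x j + P j)) n.

(* psi and phi written as expressions, so that their smoothness is [eval_smooth]. *)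
Definition psi_expr (i : nat) : expr :=
  EMul (EAdd (ECoord i) (EConst (P i)))
       (EInvSqrt (esum n (fun j => EMul (EAdd (ECoord j) (EConst (P j)))
                                         (EAdd (ECoord j) (EConst (P j)))))).
Definition phi_expr (i : nat) : expr :=
  EAdd (EMul (EMul (EConst 2) (esum n (fun j => EMul (ECoord j) (EConst (P j))))) (ECoord i))
       (EConst (- P i)).

(* psi x = (x + P)/|x + P|  and its inverse  phi y = 2 (y.P) y - P. *)
Definition psi (x : vec) : vec := fun i => eval (psi_expr i) x.
Definition phi (y : vec) : vec := fun i => eval (phi_expr i) y.

Lemma psi_val x i : psi x i = (x i + P i) * / sqrt (Q x).
Proof. unfold psi, psi_expr. simpl. rewrite eval_esum. reflexivity. Qed.

Lemma phi_val y i : phi y i = 2 * dot n y P * y i + - P i.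
Proof. unfold phi, phi_expr. simpl. rewrite eval_esum. reflexivity. Qed.

Hypothesis HP : sphere n P.

Lemma Q_expand x : Q x = dot n x x + 2 * dot n x P + 1.
Proof.
  rewrite <- HP. transitivity (1 * dot n x x + 2 * dot n x P + 1 * dot n P P); [|ring].
  unfold Q, dot. rewrite <- sum_lin3. apply sum_eq; intros; ring.
Qed.

Lemma ball_P_sq a x r : veq n a P -> r > 0 -> ball n a r x ->
  sum_f_R0 (fun j => (x j - P j) * (x j - P j)) n < r * r.
Proof.
  intros Ha Hr Hb. unfold ball in Hb. rewrite (vdist_veq n x x a P) in Hb by (auto; intros ? ?; auto).
  rewrite vdist_sq in Hb. set (S := sum_f_R0 _ n) in *.
  assert (0 <= S) by (apply cond_pos_sum; intros; apply Rle_0_sqr).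
  pose proof (sqrt_sqrt S H). pose proof (sqrt_pos S). nra.
Qed.

Lemma Q_pos a x : veq n a P -> ball n a (1/2) x -> Q x > 0.
Proof.
  intros Ha Hb. pose proof (ball_P_sq a x (1/2) Ha ltac:(lra) Hb) as H.
  assert (Hlow : Q x >= 7/2 * dot n P P + (-7) * sum_f_R0 (fun j => (x j - P j) * (x j - P j)) n
                         + 0 * sum_f_R0 (fun _ => 0) n).
  { unfold Q, dot. rewrite <- (sum_lin3 n (7/2) (-7) 0 _ _ (fun _ => 0)).
    apply Rle_ge, sum_Rle. intros j _. pose proof (Rle_0_sqr (x j - P j + P j / 4)). unfold Rsqr in *. nra. }
  unfold sphere in HP. rewrite HP in Hlow. nra.
Qed.

Lemma dot_P_pos a y : veq n a P -> ball n a (1/2) y -> sphere n y -> dot n y P > 0.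
Proof.
  intros Ha Hb Hy. pose proof (ball_P_sq a y (1/2) Ha ltac:(lra) Hb) as H.
  assert (E : 2 * dot n y P = 1 * dot n y y + 1 * dot n P P
              + (-1) * sum_f_R0 (fun j => (y j - P j) * (y j - P j)) n).
  { unfold dot. rewrite <- sum_lin3, scal_sum. apply sum_eq; intros; ring. }
  unfold sphere in HP, Hy. rewrite HP, Hy in E. nra.
Qed.

Lemma psi_sphere x : Q x > 0 -> sphere n (psi x).
Proof.
  intros Hq. unfold sphere, dot.
  transitivity (/ sqrt (Q x) * / sqrt (Q x) * Q x).
  - transitivity (sum_f_R0 (fun j => (x j + P j) * (x j + P j) * (/ sqrt (Q x) * / sqrt (Q x))) n).
    + apply sum_eq; intros; rewrite psi_val; ring.
    + rewrite <- scal_sum. reflexivity.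
  - pose proof (sqrt_sqrt (Q x) ltac:(lra)). pose proof (sqrt_lt_R0 _ Hq).
    set (r := sqrt (Q x)) in *. rewrite <- H. field; lra.
Qed.

Lemma phi_sphere y : sphere n y -> sphere n (phi y).
Proof.
  intros Hy. unfold sphere in *. set (c := dot n y P).
  transitivity ((4 * c * c) * dot n y y + (-4 * c) * dot n y P + 1 * dot n P P).
  - unfold dot. rewrite <- sum_lin3. apply sum_eq; intros. rewrite phi_val. fold c. ring.
  - rewrite Hy, HP. fold c. ring.
Qed.

Lemma phi_psi x i : Q x > 0 -> sphere n x -> phi (psi x) i = x i.
Proof.
  intros Hq Hx. rewrite phi_val, psi_val.
  assert (E : dot n (psi x) P = / sqrt (Q x) * (dot n x P + 1)).
  { unfold sphere in HP. rewrite <- HP. unfold dot. rewrite <- plus_sum, scal_sum.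
    apply sum_eq; intros. rewrite psi_val; ring. }
  rewrite E. pose proof (Q_expand x) as Qe. unfold sphere in Hx. rewrite Hx in Qe.
  pose proof (sqrt_sqrt (Q x) ltac:(lra)). pose proof (sqrt_lt_R0 _ Hq).
  set (r := sqrt (Q x)) in *. set (c := dot n x P) in *.
  replace (2 * (/ r * (c + 1)) * ((x i + P i) * / r)) with (2 * (c + 1) * (x i + P i) / (r * r))
    by (field; lra).
  rewrite H, Qe. rewrite Qe in Hq. field. lra.
Qed.

Lemma psi_phi y i : sphere n y -> dot n y P > 0 -> psi (phi y) i = y i.
Proof.
  intros Hy Hc. unfold sphere in Hy. rewrite psi_val. set (c := dot n y P) in *.
  assert (E : Q (phi y) = (2 * c) * (2 * c)).
  { transitivity ((4 * c * c) * dot n y y + 0 * sum_f_R0 (fun _ => 0) n + 0 * sum_f_R0 (fun _ => 0) n).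
    - unfold Q, dot. rewrite <- (sum_lin3 n _ 0 0 _ (fun _ => 0) (fun _ => 0)). apply sum_eq; intros.
      rewrite phi_val. fold c. ring.
    - rewrite Hy. ring. }
  rewrite E, sqrt_square by lra. rewrite phi_val. fold c. field. lra.
Qed.

Lemma psi_diffeo_germ p q : veq n p P -> veq n q P -> sphere_diffeo_germ n p q psi.
Proof.
  intros Hp Hq. exists (1/2). split; [lra|]. exists phi.
  assert (HQp : Q p = 2 * 2).
  { transitivity (4 * dot n P P + 0 * sum_f_R0 (fun _ => 0) n + 0 * sum_f_R0 (fun _ => 0) n).
    - unfold Q, dot. rewrite <- (sum_lin3 n _ 0 0 _ (fun _ => 0) (fun _ => 0)). apply sum_eq.
      intros j Hj. rewrite Hp; auto. ring.
    - unfold sphere in HP. rewrite HP. ring. }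
  split; [|split; [|split; [|split]]].
  - intros i Hi. rewrite psi_val, HQp, sqrt_square, Hp, Hq by (auto; lra). field.
  - intros i Hi. apply eval_smooth. simpl. split; [split; auto|].
    split; [apply wf_esum; intros j Hj; simpl; auto|].
    intros x Hx. rewrite eval_esum. apply (Q_pos p x Hp Hx).
  - intros i Hi. apply eval_smooth. simpl. split; auto. split; auto. split; auto.
    apply wf_esum. intros j Hj; simpl; auto.
  - intros x Hx Hb. assert (Hpos : Q x > 0) by (apply (Q_pos p); auto).
    split; [apply psi_sphere; auto|]. intros i _. apply phi_psi; auto.
  - intros y Hy Hb. split; [apply phi_sphere; auto|]. intros i _. apply psi_phi; auto.
    apply (dot_P_pos q); auto.
Qed.

Lemma psi_reflection (u : vec) t i : sphere n u -> dot n P u = t -> t * t < 1 ->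
  psi (fun j => P j + - (2 * t) * u j) i = / sqrt (1 - t ^ 2) * (P i + - t * u i).
Proof.
  intros Hu Ht Ht1. unfold sphere in Hu, HP. rewrite psi_val.
  assert (E : Q (fun j => P j + - (2 * t) * u j) = 4 * (1 - t ^ 2)).
  { unfold Q. transitivity (4 * dot n P P + (- 8 * t) * dot n P u + (4 * t * t) * dot n u u).
    - unfold dot. rewrite <- sum_lin3. apply sum_eq; intros. ring.
    - rewrite HP, Hu, Ht. ring. }
  rewrite E, sqrt_mult by nra.
  replace 4 with (2 * 2) by ring. rewrite sqrt_square by lra.
  assert (0 < sqrt (1 - t^2)) by (apply sqrt_lt_R0; nra).
  field. lra.
Qed.

End CentralProjection.
(** * A-equivalence preserves regularity *)

(* A germ with zero velocity at s0 is never A-equivalent to a germ with nonzero velocity: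
   if g o ph = ps o f, the chain rule gives g'(s0) ph'(s0) = 0, and ph'(s0) <> 0 because
   ph has a differentiable inverse. *)
Lemma not_A_equiv_singular_regular n (I : R -> Prop) s0 (f g : R -> vec) D :
  (exists e, e > 0 /\ forall s, Rabs (s - s0) < e -> I s) ->
  (forall j, (j <= n)%nat -> derivable_pt_lim (fun s => f s j) s0 0) ->
  vderiv n g s0 D -> ~ veq n D vzero ->
  ~ A_equiv n I s0 f g.
Proof.
  intros [eI [HeI HI]] Hf Hg HDnz [ph [ps [Hph [Hps [d [Hd Hrel]]]]]].
  destruct Hph as [eps [Heps [chi [Hph0 [[Fp [Fph HFp]] [[Fc [Fchi HFc]] Hinv]]]]]].
  destruct (HFp ph Fph) as [dph [_ Hdph]]. destruct (HFc chi Fchi) as [dchi [_ Hdchi]].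
  assert (J0 : Rabs (s0 - s0) < eps) by (rewrite Rminus_diag, Rabs_R0; lra).
  specialize (Hdph s0 J0). specialize (Hdchi s0 J0).
  assert (Hinv_deriv : dchi s0 * dph s0 = 1).
  { rewrite <- Hph0 in Hdchi at 1.
    apply (derivable_pt_lim_unique_near (comp chi ph) id s0 _ _ eps Heps);
      [intros t Ht; apply Hinv, Ht| |apply derivable_pt_lim_id].
    exact (derivable_pt_lim_comp ph chi s0 _ _ Hdph Hdchi). }
  destruct Hps as [eps' [Heps' [_ [Hps0 [Hsm _]]]]].
  apply HDnz. intros i Hi. unfold vzero.
  assert (HL : derivable_pt_lim (fun s => g (ph s) i) s0 (D i * dph s0)).
  { pose proof (Hg i Hi) as Hgi. rewrite <- Hph0 in Hgi at 1.
    exact (derivable_pt_lim_comp ph (fun s => g s i) s0 _ _ Hdph Hgi). }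
  assert (HR : derivable_pt_lim (fun s => ps (f s) i) s0 0).
  { apply (smooth_comp_zero_velocity n (fun x => ps x i) (f s0) eps' Heps' (Hsm i Hi) f s0);
      [intros k _; reflexivity | exact Hf]. }
  assert (E : D i * dph s0 = 0).
  { refine (derivable_pt_lim_unique_near _ _ s0 _ _ (Rmin d eI) ltac:(apply Rmin_pos; lra) _ HL HR).
    intros t Ht. pose proof (Rmin_l d eI). pose proof (Rmin_r d eI).
    apply Hrel; [apply HI; lra | lra | exact Hi]. }
  destruct (Rmult_integral _ _ E) as [|Z]; auto. rewrite Z in Hinv_deriv. lra.
Qed.

Lemma ort_zero_velocity n P (c : R -> vec) D s0 :
  vderiv n c s0 D -> dot n P (c s0) = 0 -> dot n P D = 0 ->
  forall j, (j <= n)%nat -> derivable_pt_lim (fun s => ort n P c s j) s0 0.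
Proof.
  intros Hc Ht0 HtD j Hj.
  assert (Ht : derivable_pt_lim (fun s => - (2 * dot n P (c s))) s0 (- (2 * 0))).
  { rewrite <- HtD. apply (derivable_pt_lim_opp (fun s => 2 * dot n P (c s))).
    apply (derivable_pt_lim_scal (fun s => dot n P (c s))), dot_const_deriv, Hc. }
  pose proof (derivable_pt_lim_mult _ (fun s => c s j) s0 _ _ Ht (Hc j Hj)) as Hprod.
  pose proof (derivable_pt_lim_plus (fct_cte (P j)) _ s0 _ _ (derivable_pt_lim_const (P j) s0) Hprod)
    as Hsum.
  simpl in Hsum. rewrite Ht0 in Hsum.
  replace 0 with (0 + (- (2 * 0) * c s0 j + - (2 * 0) * D j)) by ring.
  exact Hsum.
Qed.

Lemma ort_L_equiv_ped n (I : R -> Prop) P (un : R -> vec) s0 :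
  sphere n P -> (forall s, I s -> sphere n (un s)) ->
  dot n P (un s0) = 0 -> continuity_pt (fun s => dot n P (un s)) s0 ->
  L_equiv n I s0 (ort n P un) (ped n P un).
Proof.
  intros HP Hun Ht0 Hcont. exists (psi n P). split.
  - apply psi_diffeo_germ; auto; intros i _; unfold ort, ped, vadd, vscale; rewrite Ht0.
    + ring.
    + replace (1 - 0 ^ 2) with 1 by ring. rewrite sqrt_1. field.
  - destruct (continuity_pt_near _ _ (1/2) Hcont ltac:(lra)) as [d [Hd Hnear]].
    exists d. split; auto. intros s Hs Hsd i _.
    specialize (Hnear s Hsd). rewrite Ht0, Rminus_0_r in Hnear. apply Rabs_def2 in Hnear.
    symmetry. apply (psi_reflection n P HP (un s)); auto. nra.
Qed.

(** * The Frenet-type frame *)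

(* Differentiating u_j.u_n = 0, with u_j' in span(u_{j-1}, u_{j+1}) orthogonal to u_n,
   shows that u_n' is orthogonal to u_0, ..., u_{n-2}. *)
Lemma dual_deriv_orthogonal n I gamma u kappa un s D j :
  (2 <= n)%nat -> is_open_interval I ->
  spherical_unit_speed n I gamma u kappa -> spherical_dual n I u un ->
  I s -> vderiv n un s D -> (j <= n - 2)%nat -> dot n (u j s) D = 0.
Proof.
  intros Hn [_ [_ Hopen]] [_ [_ [_ [_ [_ Hrec]]]]] Hdual Hs HD Hj.
  assert (Horth : forall j s, (j < n)%nat -> I s -> dot n (u j s) (un s) = 0)
    by (intros j' s' Hj' Hs'; apply (Hdual s' Hs'); auto).
  destruct (Hrec (S j) s ltac:(lia) Hs) as [dj [Hdj [_ [Hkp Hframe]]]].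
  replace (S j - 1)%nat with j in * by lia.
  assert (Hdj0 : dot n dj (un s) = 0).
  { rewrite (dot_ext n dj (un s)
      (fun k => kappa (S j) s * u (S j) s k + (- kappa j s) * u (S j - 2)%nat s k) (un s)).
    - rewrite dot_lin, !Horth; auto; [ring|lia|lia].
    - intros k Hk. rewrite (Hframe k Hk). unfold vscale, vadd. field. lra.
    - intros k _; auto. }
  pose proof (dot_deriv n (u j) un dj D s Hdj HD) as Hder.
  rewrite Hdj0, Rplus_0_l in Hder.
  destruct (Hopen s Hs) as [eI [HeI HI]].
  symmetry. apply (derivable_pt_lim_unique_near (fun _ => 0) (fun t => dot n (u j t) (un t)) s 0 _ eI HeI);
    [intros t Ht; symmetry; apply Horth; auto; lia | apply derivable_pt_lim_const | exact Hder].
Qed.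

Lemma S_n_minus_2_orthogonal n u un s0 P w : in_S_n_minus_2 n u un s0 P ->
  (forall j, (j <= n - 2)%nat -> dot n (u j s0) w = 0) -> dot n P w = 0.
Proof.
  intros [_ [_ [_ [c Hc]]]] Hw.
  rewrite (dot_ext n P w _ w Hc (fun _ _ => eq_refl)), dot_span.
  transitivity (sum_f_R0 (fun _ => 0) (n - 2)).
  - apply sum_eq. intros j Hj. rewrite Hw; auto; ring.
  - clear. induction (n - 2)%nat; simpl; [|rewrite IHn0]; ring.
Qed.

Theorem mainTheorem10 (n : nat) (I : R -> Prop) (gamma : R -> vec)
  (u : nat -> R -> vec) (kappa : nat -> R -> R) (un : R -> vec) (s0 : R) (P : vec) :
  (2 <= n)%nat ->
  is_open_interval I ->
  spherical_unit_speed n I gamma u kappa ->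
  spherical_dual n I u un ->
  (forall s, I s -> exists d, vderiv n un s d /\ ~ veq n d vzero) ->
  I s0 ->
  in_S_n_minus_2 n u un s0 P ->
  L_equiv n I s0 (ort n P un) (ped n P un) /\
  ~ A_equiv n I s0 (ort n P un) un.
Proof.
  intros Hn HI Hcurve Hdual Hreg Hs0 HP.
  assert (Hsph : forall s, I s -> sphere n (un s)) by (intros s Hs; apply (Hdual s Hs)).
  assert (Ht0 : dot n P (un s0) = 0).
  { apply (S_n_minus_2_orthogonal n u un s0); auto. intros j Hj. apply (Hdual s0 Hs0). lia. }
  destruct (Hreg s0 Hs0) as [D [HD HDnz]].
  assert (HtD : dot n P D = 0).
  { apply (S_n_minus_2_orthogonal n u un s0); auto. intros j Hj.
    apply (dual_deriv_orthogonal n I gamma u kappa un s0 D j); auto. }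
  split.
  - apply ort_L_equiv_ped; [apply HP | exact Hsph | exact Ht0 |].
    exact (derivable_pt_lim_continuity _ _ _ (dot_const_deriv n P un D s0 HD)).
  - apply (not_A_equiv_singular_regular n I s0 _ un D); auto.
    + destruct HI as [_ [_ Hopen]]. apply Hopen, Hs0.
    + apply (ort_zero_velocity n P un D s0); auto.
Qed.
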